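(* Consider the semi-discrete flux globalization based low-dissipation path-conservative central-upwind (LD PCCU) scheme described in the context, and assume that all quantities appearing in it are well defined (all densities $\rho^\pm_{j+1/2}>0$, all $\Gamma^\pm_{j+1/2}>0$, the square roots defining $c^\pm_{j+1/2}$ are real, $a^+_{j+1/2}-a^-_{j+1/2}>0$, and $\rho^*_{j+1/2}\neq0$, $\Gamma^*_{j+1/2}\neq0$ for all relevant $j$). 1. If at some time $t$ the cell averages satisfy $\overline\Gamma_j\equiv\widehat\Gamma$ and $\overline\Pi_j\equiv\widehat\Pi$ for all $j$ (including ghost cells), where $\widehat\Gamma,\widehat\Pi$ are constants, then $$\frac{d}{dt}\overline\Gamma_j=\frac{d}{dt}\overline\Pi_j=0\quad\text{for all } j=1,\dots,N,$$ i.e., the fourth and fifth components of the right-hand side of the semi-discrete scheme vanish. 2. Suppose that at time level $t^n$ the cell-centered velocities and pressures satisfy $u^n_j\equiv\widehat u$ and $p^n_j\equiv\widehat p$ for all $j$ (including ghost cells), with constants $\widehat u,\widehat p$, and let the cell averages at $t^{n+1}=t^n+\Delta t$ be computed by one forward Euler step $$\overline{\mathbf U}^{\,n+1}_j=\overline{\mathbf U}^{\,n}_j-\frac{\Delta t}{\Delta x}\Big(\boldsymbol{\mathcal K}_{j+1/2}-\boldsymbol{\mathcal K}_{j-1/2}\Big),\qquad j=1,\dots,N,$$ with the numerical fluxes evaluated from the data at $t^n$. Assume $\overline\rho^{\,n+1}_j\neq0$ and $\overline\Gamma^{\,n+1}_j\neq0$. Then $$u^{n+1}_j:=\frac{(\overline{\rho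 u})^{n+1}_j}{\overline\rho^{\,n+1}_j}=\widehat u,\qquad p^{n+1}_j:=\frac{1}{\overline\Gamma^{\,n+1}_j}\Big[\overline E^{\,n+1}_j-\frac{\big((\overline{\rho u})^{n+1}_j\big)^2}{2\overline\rho^{\,n+1}_j}-\overline\Pi^{\,n+1}_j\Big]=\widehat p\qquad\text{for all } j=1,\dots,N.$$
   Context: Model: the 1-D $\gamma$-based multifluid system $\rho_t+(\rho u)_x=0$, $(\rho u)_t+(\rho u^2+p)_x=0$, $E_t+[u(E+p)]_x=0$, $\Gamma_t+(u\Gamma)_x=\Gamma u_x$, $\Pi_t+(u\Pi)_x=\Pi u_x$, where $\Gamma=1/(\gamma-1)$, $\Pi=\gamma\pi_\infty/(\gamma-1)$ and the EOS is $p=(E-\tfrac12\rho u^2-\Pi)/\Gamma$. Write $\mathbf U=(\rho,\rho u,E,\Gamma,\Pi)^\top$, $\mathbf F(\mathbf U)=(\rho u,\rho u^2+p,u(E+p),u\Gamma,u\Pi)^\top$. Let ${\rm minmod}(c_1,c_2)$ equal $\min(c_1,c_2)$ if both are positive, $\max(c_1,c_2)$ if both are negative, and $0$ otherwise. Mesh and data: uniform cells $C_j=[x_{j-1/2},x_{j+1/2}]$ of width $\Delta x$, $j=1,\dots,N$, together with finitely many ghost cells on each side supplying the data needed below. Cell averages $\overline{\mathbf U}_j=(\overline\rho_j,(\overline{\rho u})_j,\overline E_j,\overline\Gamma_j,\overline\Pi_j)^\top$ are given; set $u_j=(\overline{\rho u})_j/\overline\rho_j$, $p_j=\big[\overline E_j-((\overline{\rho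 u})_j)^2/(2\overline\rho_j)-\overline\Pi_j\big]/\overline\Gamma_j$, and $\mathbf V_j=(\overline\rho_j,u_j,p_j,\overline\Gamma_j,\overline\Pi_j)^\top$. Reconstruction: $\mathbf V^-_{j+1/2}=\mathbf V_j+\tfrac{\Delta x}{2}(\mathbf V_x)_j$, $\mathbf V^+_{j+1/2}=\mathbf V_{j+1}-\tfrac{\Delta x}{2}(\mathbf V_x)_{j+1}$, where the slopes $(\mathbf V_x)_j$ are computed componentwise by a limiter (e.g. generalized minmod or SBM) with the property that the slope of a component vanishes whenever that component takes the same value in all cells of the stencil. Write $\mathbf V^\pm_{j+1/2}=(\rho^\pm,u^\pm,p^\pm,\Gamma^\pm,\Pi^\pm)_{j+1/2}$, and define $E^\pm_{j+1/2}=\Gamma^\pm_{j+1/2}p^\pm_{j+1/2}+\tfrac12\rho^\pm_{j+1/2}(u^\pm_{j+1/2})^2+\Pi^\pm_{j+1/2}$, $\mathbf U^\pm_{j+1/2}=(\rho^\pm,\rho^\pm u^\pm,E^\pm,\Gamma^\pm,\Pi^\pm)^\top_{j+1/2}$, $\mathbf F^\pm_{j+1/2}=\mathbf F(\mathbf U^\pm_{j+1/2})$. Global fluxes: let $\mathbf B_j=\big(0,0,0,\tfrac{\Gamma^-_{j+1/2}+\Gamma^+_{j-1/2}}{2}(u^-_{j+1/2}-u^+_{j-1/2}),\tfrac{\Pi^-_{j+1/2}+\Pi^+_{j-1/2}}{2}(u^-_{j+1/2}-u^+_{j-1/2})\big)^\top$ and $\mathbf B_{\Psi,j+1/2}=\big(0,0,0,\tfrac{\Gamma^+_{j+1/2}+\Gamma^-_{j+1/2}}{2}(u^+_{j+1/2}-u^-_{j+1/2}),\tfrac{\Pi^+_{j+1/2}+\Pi^-_{j+1/2}}{2}(u^+_{j+1/2}-u^-_{j+1/2})\big)^\top$.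 Set $\mathbf R^-_{1/2}=\mathbf 0$, $\mathbf R^+_{1/2}=\mathbf B_{\Psi,1/2}$, and recursively $\mathbf R^-_{j+1/2}=\mathbf R^+_{j-1/2}+\mathbf B_j$, $\mathbf R^+_{j+1/2}=\mathbf R^-_{j+1/2}+\mathbf B_{\Psi,j+1/2}$ for $j=1,\dots,N$; then $\mathbf K^\pm_{j+1/2}=\mathbf F^\pm_{j+1/2}-\mathbf R^\pm_{j+1/2}$. Local speeds: $c=\sqrt{[(1+\Gamma)p+\Pi]/(\Gamma\rho)}$ evaluated at the $\pm$ point values, $a^+_{j+1/2}=\max\{u^-_{j+1/2}+c^-_{j+1/2},u^+_{j+1/2}+c^+_{j+1/2},0\}$, $a^-_{j+1/2}=\min\{u^-_{j+1/2}-c^-_{j+1/2},u^+_{j+1/2}-c^+_{j+1/2},0\}$. Anti-diffusion: $\mathbf U^*_{j+1/2}=\dfrac{a^+_{j+1/2}\mathbf U^+_{j+1/2}-a^-_{j+1/2}\mathbf U^-_{j+1/2}-(\mathbf K^+_{j+1/2}-\mathbf K^-_{j+1/2})}{a^+_{j+1/2}-a^-_{j+1/2}}$ with components $(\rho^*,(\rho u)^*,E^*,\Gamma^*,\Pi^* )_{j+1/2}$, $u^*_{j+1/2}=(\rho u)^*_{j+1/2}/\rho^*_{j+1/2}$; for $w\in\{\rho,\Gamma,\Pi\}$, $q^w_{j+1/2}={\rm minmod}\big(-a^-_{j+1/2}(w^*_{j+1/2}-w^-_{j+1/2}),\,a^+_{j+1/2}(w^+_{j+1/2}-w^*_{j+1/2})\big)$;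 and $\mathbf q_{j+1/2}=q^\rho_{j+1/2}\big(1,u^*,\tfrac12(u^* )^2,0,0\big)^\top_{j+1/2}+q^\Gamma_{j+1/2}\big(0,0,\tfrac{1}{\Gamma^*}\big[E^*-\tfrac{((\rho u)^* )^2}{2\rho^*}-\Pi^*\big],1,0\big)^\top_{j+1/2}+q^\Pi_{j+1/2}(0,0,1,0,1)^\top$. Numerical flux: $\boldsymbol{\mathcal K}_{j+1/2}=\dfrac{a^+_{j+1/2}\mathbf K^-_{j+1/2}-a^-_{j+1/2}\mathbf K^+_{j+1/2}}{a^+_{j+1/2}-a^-_{j+1/2}}+\dfrac{a^+_{j+1/2}a^-_{j+1/2}}{a^+_{j+1/2}-a^-_{j+1/2}}(\mathbf U^+_{j+1/2}-\mathbf U^-_{j+1/2})+\mathbf q_{j+1/2}$. Semi-discrete LD PCCU scheme: $\dfrac{d}{dt}\overline{\mathbf U}_j=-\dfrac{\boldsymbol{\mathcal K}_{j+1/2}-\boldsymbol{\mathcal K}_{j-1/2}}{\Delta x}$, $j=1,\dots,N$. *)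

From HB Require Import structures.
From mathcomp Require Import all_boot all_order all_algebra.
Set Implicit Arguments. Unset Strict Implicit. Unset Printing Implicit Defensive.
Import Order.TTheory GRing.Theory Num.Theory.
Local Open Scope ring_scope.

(* Five-component state vectors  (rho, rho u, E, Gamma, Pi). *)
Record vec5 (R : Type) := V5 { c1 : R; c2 : R; c3 : R; c4 : R; c5 : R }.

Section Ops.
Variable R : rcfType.
Definition vadd (a b : vec5 R) : vec5 R :=
  V5 (c1 a + c1 b) (c2 a + c2 b) (c3 a + c3 b) (c4 a + c4 b) (c5 a + c5 b).
Definition vscale (k : R) (a : vec5 R) : vec5 R :=
  V5 (k * c1 a) (k * c2 a) (k * c3 a) (k * c4 a) (k * c5 a).
Definition vsub (a b : vec5 R) : vec5 R := vadd a (vscale (-1) b).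
Definition vzero : vec5 R := V5 0 0 0 0 0.

Definition minmod (x y : R) : R :=
  if (0 < x) && (0 < y) then Num.min x y
  else if (x < 0) && (y < 0) then Num.max x y else 0.

Definition vel (U : vec5 R) : R := c2 U / c1 U.
Definition pres (U : vec5 R) : R :=
  (c3 U - (c2 U) ^+ 2 / (2 * c1 U) - c5 U) / c4 U.

Definition flux (U : vec5 R) : vec5 R :=
  let u := vel U in let p := pres U in
  V5 (c2 U) (c2 U * u + p) (u * (c3 U + p)) (u * c4 U) (u * c5 U).

Record pv := PV { prho : R; pu : R; pp : R; pG : R; pP : R }.
Definition U_of_pv (v : pv) : vec5 R :=
  V5 (prho v) (prho v * pu v)
     (pG v * pp v + 2^-1 * prho v * (pu v) ^+ 2 + pP v) (pG v) (pP v).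
Definition sound (v : pv) : R :=
  Num.sqrt (((1 + pG v) * pp v + pP v) / (pG v * prho v)).
Definition sound_arg (v : pv) : R :=
  ((1 + pG v) * pp v + pP v) / (pG v * prho v).
End Ops.

(* A limiter computes the slope of one component (given as a function of the
   cell index) at cell j.  Admissibility: it vanishes whenever the component
   is constant on the stencil {j-s, ..., j+s}. *)
Definition limiter_ok (R : rcfType) (s : nat) (lim : (int -> R) -> int -> R) :=
  forall (w : int -> R) (j : int),
    (forall i : int, (j - s%:Z <= i <= j + s%:Z) -> w i = w j) -> lim w j = 0.

Section Scheme.
Variables (R : rcfType) (dx : R) (lim : (int -> R) -> int -> R)
          (Ub : int -> vec5 R).
(* Ub j = cell average of cell C_j; cells 1..N are interior, all other
   indices are ghost cells.  Interface index j stands for x_{j+1/2}. *)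

Definition cellV (j : int) : pv R :=
  PV (c1 (Ub j)) (vel (Ub j)) (pres (Ub j)) (c4 (Ub j)) (c5 (Ub j)).

Definition comp_rho j := prho (cellV j).
Definition comp_u j := pu (cellV j).
Definition comp_p j := pp (cellV j).
Definition comp_G j := pG (cellV j).
Definition comp_P j := pP (cellV j).

Definition recm (w : int -> R) (j : int) : R := w j + dx / 2 * lim w j.
Definition recp (w : int -> R) (j : int) : R := w (j + 1) - dx / 2 * lim w (j + 1).

Definition Vm (j : int) : pv R :=
  PV (recm comp_rho j) (recm comp_u j) (recm comp_p j) (recm comp_G j) (recm comp_P j).
Definition Vp (j : int) : pv R :=
  PV (recp comp_rho j) (recp comp_u j) (recp comp_p j) (recp comp_G j) (recp comp_P j).

Definition Um j := U_of_pv (Vm j).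
Definition Up j := U_of_pv (Vp j).
Definition Fm j := flux (Um j).
Definition Fp j := flux (Up j).

Definition Bcell (j : int) : vec5 R :=
  let du := pu (Vm j) - pu (Vp (j - 1)) in
  V5 0 0 0 ((pG (Vm j) + pG (Vp (j - 1))) / 2 * du)
           ((pP (Vm j) + pP (Vp (j - 1))) / 2 * du).
Definition BPsi (j : int) : vec5 R :=
  let du := pu (Vp j) - pu (Vm j) in
  V5 0 0 0 ((pG (Vp j) + pG (Vm j)) / 2 * du)
           ((pP (Vp j) + pP (Vm j)) / 2 * du).

(* (R^-_{n+1/2}, R^+_{n+1/2}) for n : nat, following the recursion
   R^-_{1/2} = 0, R^+_{1/2} = B_{Psi,1/2},
   R^-_{j+1/2} = R^+_{j-1/2} + B_j, R^+_{j+1/2} = R^-_{j+1/2} + B_{Psi,j+1/2}. *)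
Fixpoint RR (n : nat) : vec5 R * vec5 R :=
  match n with
  | 0 => (vzero R, BPsi 0)
  | n'.+1 => let rm := vadd (RR n').2 (Bcell (Posz n)) in
             (rm, vadd rm (BPsi (Posz n)))
  end.

(* Only interfaces j = 0..N (i.e. 1/2, ..., N+1/2) are used by the scheme;
   negative indices are never used and are given a dummy value. *)
Definition Rm (j : int) : vec5 R :=
  match j with Posz n => (RR n).1 | Negz _ => vzero R end.
Definition Rp (j : int) : vec5 R :=
  match j with Posz n => (RR n).2 | Negz _ => vzero R end.

Definition Km j := vsub (Fm j) (Rm j).
Definition Kp j := vsub (Fp j) (Rp j).

Definition cm j := sound (Vm j).
Definition cp j := sound (Vp j).
Definition aplus j :=
  Num.max (Num.max (pu (Vm j) + cm j) (pu (Vp j) + cp j)) 0.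
Definition aminus j :=
  Num.min (Num.min (pu (Vm j) - cm j) (pu (Vp j) - cp j)) 0.

Definition Ustar (j : int) : vec5 R :=
  vscale (aplus j - aminus j)^-1
    (vsub (vsub (vscale (aplus j) (Up j)) (vscale (aminus j) (Um j)))
          (vsub (Kp j) (Km j))).
Definition ustar j := c2 (Ustar j) / c1 (Ustar j).

Definition qw (sel : vec5 R -> R) (j : int) : R :=
  minmod (- aminus j * (sel (Ustar j) - sel (Um j)))
         (aplus j * (sel (Up j) - sel (Ustar j))).

Definition qvec (j : int) : vec5 R :=
  let S := Ustar j in
  vadd (vadd
    (vscale (qw (@c1 R) j) (V5 1 (ustar j) (2^-1 * ustar j ^+ 2) 0 0))
    (vscale (qw (@c4 R) j)
       (V5 0 0 ((c4 S)^-1 * (c3 S - (c2 S) ^+ 2 / (2 * c1 S) - c5 S)) 1 0)))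
    (vscale (qw (@c5 R) j) (V5 0 0 1 0 1)).

Definition Kflux (j : int) : vec5 R :=
  let d := aplus j - aminus j in
  vadd (vadd
    (vscale d^-1 (vsub (vscale (aplus j) (Km j)) (vscale (aminus j) (Kp j))))
    (vscale (aplus j * aminus j / d) (vsub (Up j) (Um j))))
    (qvec j).

Definition rhs (j : int) : vec5 R :=
  vscale (- dx^-1) (vsub (Kflux j) (Kflux (j - 1))).

Definition euler_step (dt : R) (j : int) : vec5 R :=
  vadd (Ub j) (vscale dt (rhs j)).

Definition well_defined (N : nat) : Prop :=
  forall j : int, 0 <= j <= N%:Z ->
    (0 < prho (Vm j) /\ 0 < prho (Vp j)) /\ (0 < pG (Vm j) /\ 0 < pG (Vp j)) /\
    (0 <= sound_arg (Vm j) /\ 0 <= sound_arg (Vp j)) /\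
    0 < aplus j - aminus j /\
    (c1 (Ustar j) != 0 /\ c4 (Ustar j) != 0).
End Scheme.

From HB Require Import structures.
From mathcomp Require Import all_boot all_order all_algebra.
From mathcomp Require Import ring lra.
Import Order.TTheory GRing.Theory Num.Theory.
Local Open Scope ring_scope.

(* Both parts of the theorem rest on one observation: every vector built by the
   scheme satisfies two linear constraints  w1.X = l a1,  w2.X = l a2  for some
   weight l, and such constraints survive the linear combinations the scheme
   performs (sums, scalings, differences, the combination defining U*, the
   numerical flux, the divided difference defining the right-hand side and the
   Euler update), the weight being combined the same way.
   - Part 1 (constant Gamma and Pi): take the covectors e4, e5 and a = (G, P).
     Point values have weight 1, fluxes F have weight u, the B-terms telescope,
     so both one-sided K's have the same weight u^-_{1/2} at every interface;
     U* then has Gamma = G, Pi = P, so the anti-diffusion q has weight 0.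
     Hence every numerical flux has weight u^-_{1/2} and the right-hand side
     has weight 0.
   - Part 2 (constant u and p): the constraints say  rho u = u rho + l p  and
     E = u^2/2 rho + p Gamma + Pi + l u p.  Point values and B-terms have
     weight 0, fluxes weight 1; U* has velocity u and pressure p, so q has
     weight 0.  Hence every numerical flux has weight 1, the right-hand side
     weight 0, and the updated cell keeps weight 0, i.e. it has velocity u and
     pressure p.
   The file develops the constraint calculus, then facts on the reconstruction,
   then the propagation of weights through the scheme, and finally each part. *)

Ltac field_nz := field; repeat (apply/andP; split); done.

Section LinearConstraints.
Context {R : rcfType}.

Definition dot (w X : vec5 R) : R :=
  c1 w * c1 X + c2 w * c2 X + c3 w * c3 X + c4 w * c4 X + c5 w * c5 X.

Context {w1 w2 : vec5 R} {a1 a2 : R}.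

Definition on_line (l : R) (X : vec5 R) : Prop :=
  dot w1 X = l * a1 /\ dot w2 X = l * a2.

Lemma on_line_zero : on_line 0 (vzero R).
Proof. by rewrite /on_line /dot /=; split; ring. Qed.

Lemma on_line_add {l m : R} {X Y : vec5 R} :
  on_line l X -> on_line m Y -> on_line (l + m) (vadd X Y).
Proof.
move=> [hX1 hX2] [hY1 hY2].
by rewrite /on_line !mulrDl -hX1 -hX2 -hY1 -hY2 /dot /=; split; ring.
Qed.

Lemma on_line_scale (k : R) {l : R} {X : vec5 R} :
  on_line l X -> on_line (k * l) (vscale k X).
Proof. by move=> [h1 h2]; rewrite /on_line -!mulrA -h1 -h2 /dot /=; split; ring. Qed.

Lemma on_line_sub {l m : R} {X Y : vec5 R} :
  on_line l X -> on_line m Y -> on_line (l - m) (vsub X Y).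
Proof. by move=> hX hY; have := on_line_add hX (on_line_scale (-1) hY); rewrite mulN1r. Qed.

Lemma on_line_eq {l m : R} {X : vec5 R} : on_line l X -> l = m -> on_line m X.
Proof. by move=> h <-. Qed.
End LinearConstraints.

Lemma PoszS_sub1 (n : nat) : Posz n.+1 - 1 = Posz n.
Proof. by rewrite -addn1 PoszD addrK. Qed.

(* interior cells 1..N are the cells m.+1 between interfaces m and m.+1, m < N *)
Lemma interior_cell (N : nat) (j : int) :
  1 <= j <= N%:Z -> exists2 m : nat, j = Posz m.+1 & (m < N)%N.
Proof. by case: j => [[|m]|k] //; rewrite ?lez_nat => /andP [_ hm]; exists m. Qed.

(* whatever the slope, the two one-sided values inside a cell average to the
   cell value; used to get positivity of interior cell averages *)
Lemma recon_mean {R : rcfType} (dx : R) lim (w : int -> R) (j : int) :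
  recm dx lim w j + recp dx lim w (j - 1) = 2 * w j.
Proof. by rewrite /recm /recp subrK; ring. Qed.

Lemma recon_const {R : rcfType} {s : nat} {lim : (int -> R) -> int -> R} (dx : R)
    {w : int -> R} {c : R} :
  limiter_ok s lim -> (forall i, w i = c) ->
  forall j, recm dx lim w j = c /\ recp dx lim w j = c.
Proof.
move=> lim_ok hw j; have lim0 i : lim w i = 0 by apply: lim_ok => k _; rewrite !hw.
by rewrite /recm /recp !lim0 !hw mulr0 addr0 subr0.
Qed.

Section Scheme.
Context {R : rcfType} {dx : R} {lim : (int -> R) -> int -> R} {Ub : int -> vec5 R}.

Local Notation Vm := (Vm dx lim Ub).
Local Notation Vp := (Vp dx lim Ub).
Local Notation Um := (Um dx lim Ub).
Local Notation Up := (Up dx lim Ub).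
Local Notation Fm := (Fm dx lim Ub).
Local Notation Fp := (Fp dx lim Ub).
Local Notation Bcell := (Bcell dx lim Ub).
Local Notation BPsi := (BPsi dx lim Ub).
Local Notation RR := (RR dx lim Ub).
Local Notation Km := (Km dx lim Ub).
Local Notation Kp := (Kp dx lim Ub).
Local Notation aplus := (aplus dx lim Ub).
Local Notation aminus := (aminus dx lim Ub).
Local Notation Ustar := (Ustar dx lim Ub).
Local Notation ustar := (ustar dx lim Ub).
Local Notation qw := (qw dx lim Ub).
Local Notation qvec := (qvec dx lim Ub).
Local Notation Kflux := (Kflux dx lim Ub).
Local Notation rhs := (rhs dx lim Ub).

Section Propagation.
Context {w1 w2 : vec5 R} {a1 a2 : R}.
Local Notation on_line := (@on_line R w1 w2 a1 a2).

Lemma RR_on_line {g h : int -> R} :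
  (forall n : nat, on_line (g n.+1 - h n) (Bcell n.+1)) ->
  (forall n : nat, on_line (h n - g n) (BPsi n)) ->
  forall n : nat, on_line (g n - g 0) (RR n).1 /\ on_line (h n - g 0) (RR n).2.
Proof.
move=> hB hPsi; elim=> [|n [_ IHp]] /=.
  by split; [rewrite subrr; exact: on_line_zero | exact: hPsi 0%N].
have Rm_step : on_line (g n.+1 - g 0) (vadd (RR n).2 (Bcell n.+1)).
  by apply: on_line_eq (on_line_add IHp (hB n)) _; ring.
split=> //.
by apply: on_line_eq (on_line_add Rm_step (hPsi n.+1)) _; ring.
Qed.

Lemma K_on_line (g h : int -> R) {phim phip : R} {n : nat} :
  (forall k : nat, on_line (g k.+1 - h k) (Bcell k.+1)) ->
  (forall k : nat, on_line (h k - g k) (BPsi k)) ->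
  on_line phim (Fm n) -> on_line phip (Fp n) ->
  on_line (phim - (g n - g 0)) (Km n) /\ on_line (phip - (h n - g 0)) (Kp n).
Proof.
move=> hB hPsi hFm hFp; have [hRm hRp] := RR_on_line hB hPsi n.
by split; apply: on_line_sub.
Qed.

Lemma Ustar_on_line {lam kap : R} {j : int} :
  on_line lam (Um j) -> on_line lam (Up j) ->
  on_line kap (Km j) -> on_line kap (Kp j) ->
  aplus j - aminus j != 0 -> on_line lam (Ustar j).
Proof.
move=> hUm hUp hKm hKp hd.
apply: on_line_eq (on_line_scale _ (on_line_sub
  (on_line_sub (on_line_scale _ hUp) (on_line_scale _ hUm)) (on_line_sub hKp hKm))) _.
by field.
Qed.

Lemma Kflux_on_line {lam kap : R} {j : int} :
  on_line lam (Um j) -> on_line lam (Up j) ->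
  on_line kap (Km j) -> on_line kap (Kp j) -> on_line 0 (qvec j) ->
  aplus j - aminus j != 0 -> on_line kap (Kflux j).
Proof.
move=> hUm hUp hKm hKp hq hd.
apply: on_line_eq (on_line_add (on_line_add
  (on_line_scale _ (on_line_sub (on_line_scale _ hKm) (on_line_scale _ hKp)))
  (on_line_scale _ (on_line_sub hUp hUm))) hq) _.
by field.
Qed.

Lemma rhs_on_line {kap : R} {m : nat} :
  on_line kap (Kflux m.+1) -> on_line kap (Kflux m) -> on_line 0 (rhs m.+1).
Proof.
move=> hK1 hK0; rewrite /rhs PoszS_sub1.
by apply: on_line_eq (on_line_scale _ (on_line_sub hK1 hK0)) _; rewrite subrr mulr0.
Qed.

Lemma euler_on_line (dt : R) {lam : R} {j : int} :
  on_line lam (Ub j) -> on_line 0 (rhs j) -> on_line lam (euler_step dx lim Ub dt j).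
Proof.
move=> hU hr.
by apply: on_line_eq (on_line_add hU (on_line_scale dt hr)) _; rewrite mulr0 addr0.
Qed.
End Propagation.

Lemma qw_const {sel : vec5 R -> R} {c : R} {j : int} :
  sel (Um j) = c -> sel (Up j) = c -> sel (Ustar j) = c -> qw sel j = 0.
Proof. by rewrite /qw => -> -> ->; rewrite subrr !mulr0 /minmod ltxx. Qed.

Record regular_at (j : int) : Prop := RegularAt {
  rho_m_pos : 0 < prho (Vm j);
  rho_p_pos : 0 < prho (Vp j);
  gam_m_pos : 0 < pG (Vm j);
  gam_p_pos : 0 < pG (Vp j);
  speeds_pos : 0 < aplus j - aminus j;
  rho_star_neq0 : c1 (Ustar j) != 0;
  gam_star_neq0 : c4 (Ustar j) != 0 }.
Arguments rho_m_pos {j}.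
Arguments rho_p_pos {j}.
Arguments gam_m_pos {j}.
Arguments gam_p_pos {j}.
Arguments speeds_pos {j}.
Arguments rho_star_neq0 {j}.
Arguments gam_star_neq0 {j}.

Lemma well_defined_regular {N n : nat} :
  well_defined dx lim Ub N -> (n <= N)%N -> regular_at n.
Proof.
move=> wd hn; have := wd n; rewrite lez_nat hn => /(_ isT).
by move=> [[? ?] [[? ?] [_ [? [? ?]]]]]; constructor.
Qed.

Lemma interior_cell_pos {m : nat} :
  regular_at m -> regular_at m.+1 -> 0 < c1 (Ub m.+1) /\ 0 < c4 (Ub m.+1).
Proof.
move=> regm regm1.
have rho_mean := recon_mean dx lim (comp_rho Ub) m.+1.
have gam_mean := recon_mean dx lim (comp_G Ub) m.+1.
rewrite PoszS_sub1 in rho_mean gam_mean.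
have := rho_m_pos regm1; have := rho_p_pos regm.
have := gam_m_pos regm1; have := gam_p_pos regm.
rewrite /= /comp_rho /comp_G /= in rho_mean gam_mean *.
split; lra.
Qed.

Section AdvectedConstants.
Context {s : nat} {G P : R}.
Hypotheses (lim_ok : limiter_ok s lim)
  (G_const : forall j, c4 (Ub j) = G) (P_const : forall j, c5 (Ub j) = P).

Local Notation advected := (@on_line R (V5 0 0 0 1 0) (V5 0 0 0 0 1) G P).

Lemma advectedE (l : R) (X : vec5 R) :
  advected l X <-> c4 X = l * G /\ c5 X = l * P.
Proof. by rewrite /on_line /dot /= !mul0r !mul1r !add0r addr0. Qed.

Lemma advected_point_values (j : int) :
  [/\ pG (Vm j) = G, pG (Vp j) = G, pP (Vm j) = P & pP (Vp j) = P].
Proof.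
have [Gm Gp] := recon_const dx lim_ok (G_const : forall i, comp_G Ub i = G) j.
have [Pm Pp] := recon_const dx lim_ok (P_const : forall i, comp_P Ub i = P) j.
by split.
Qed.

Lemma advected_U (j : int) : advected 1 (Um j) /\ advected 1 (Up j).
Proof.
have [Gm Gp Pm Pp] := advected_point_values j.
by rewrite !advectedE /Um /Up /U_of_pv Gm Gp Pm Pp /= !mul1r.
Qed.

(* the advective fluxes u Gamma, u Pi carry the point velocity as weight *)
Lemma advected_F {j : int} :
  regular_at j -> advected (pu (Vm j)) (Fm j) /\ advected (pu (Vp j)) (Fp j).
Proof.
move=> reg; have rm := lt0r_neq0 (rho_m_pos reg); have rp := lt0r_neq0 (rho_p_pos reg).
have [Gm Gp Pm Pp] := advected_point_values j.
rewrite !advectedE /Fm /Fp /flux /vel /Um /Up /U_of_pv Gm Gp Pm Pp /=.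
by split; split; field_nz.
Qed.

(* the path-conservative terms are Gamma (resp. Pi) times a velocity jump *)
Lemma advected_Bcell (j : int) :
  advected (pu (Vm j) - pu (Vp (j - 1))) (Bcell j).
Proof.
have [Gm _ Pm _] := advected_point_values j.
have [_ Gp _ Pp] := advected_point_values (j - 1).
by rewrite advectedE /Bcell Gm Gp Pm Pp /=; split; field_nz.
Qed.

Lemma advected_BPsi (j : int) : advected (pu (Vp j) - pu (Vm j)) (BPsi j).
Proof.
have [Gm Gp Pm Pp] := advected_point_values j.
by rewrite advectedE /BPsi Gm Gp Pm Pp /=; split; field_nz.
Qed.

(* after telescoping, both K^-+ at every interface carry the weight u^-_{1/2} *)
Lemma advected_K {n : nat} :
  regular_at n -> advected (pu (Vm 0)) (Km n) /\ advected (pu (Vm 0)) (Kp n).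
Proof.
move=> reg; have [Fm_adv Fp_adv] := advected_F reg.
have hB (k : nat) : advected (pu (Vm k.+1) - pu (Vp k)) (Bcell k.+1).
  by have := advected_Bcell k.+1; rewrite PoszS_sub1.
have [Km_adv Kp_adv] := K_on_line (fun k => pu (Vm k)) (fun k => pu (Vp k))
  hB (fun k => advected_BPsi k) Fm_adv Fp_adv.
by split; [apply: on_line_eq Km_adv _ | apply: on_line_eq Kp_adv _]; ring.
Qed.

(* U* also has Gamma = G and Pi = P, so the Gamma- and Pi-anti-diffusion vanishes *)
Lemma advected_Kflux {n : nat} :
  regular_at n -> advected (pu (Vm 0)) (Kflux n).
Proof.
move=> reg; have hd := lt0r_neq0 (speeds_pos reg).
have [Um_adv Up_adv] := advected_U n.
have [Km_adv Kp_adv] := advected_K reg.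
have Ustar_adv := Ustar_on_line Um_adv Up_adv Km_adv Kp_adv hd.
have q_adv : advected 0 (qvec n).
  move: Um_adv Up_adv Ustar_adv; rewrite !advectedE !mul1r => -[Gm Pm] [Gp Pp] [Gs Ps].
  by rewrite /qvec /= (qw_const Gm Gp Gs) (qw_const Pm Pp Ps); split; ring.
exact: Kflux_on_line Um_adv Up_adv Km_adv Kp_adv q_adv hd.
Qed.

Lemma advected_rhs_zero {N : nat} :
  well_defined dx lim Ub N ->
  forall j : int, 1 <= j <= N%:Z -> c4 (rhs j) = 0 /\ c5 (rhs j) = 0.
Proof.
move=> wd j /interior_cell [m -> ltmN].
have Kflux_adv k : (k <= N)%N -> advected (pu (Vm 0)) (Kflux k).
  by move=> hk; exact: advected_Kflux (well_defined_regular wd hk).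
have := rhs_on_line (Kflux_adv _ ltmN) (Kflux_adv _ (ltnW ltmN)).
by rewrite advectedE !mul0r.
Qed.
End AdvectedConstants.

Section PressureVelocityEquilibrium.
Context {s : nat} {u p : R}.
Hypotheses (lim_ok : limiter_ok s lim)
  (u_const : forall j, vel (Ub j) = u) (p_const : forall j, pres (Ub j) = p).

Local Notation balanced :=
  (@on_line R (V5 (- u) 1 0 0 0) (V5 (- (u ^+ 2 / 2)) 0 1 (- p) (-1)) p (u * p)).

Lemma balancedE (l : R) (X : vec5 R) :
  balanced l X <->
  c2 X = u * c1 X + l * p /\ c3 X = u ^+ 2 / 2 * c1 X + p * c4 X + c5 X + l * (u * p).
Proof.
rewrite /on_line /dot /=.
split=> -[h2 h3].
  by split; [rewrite -h2 | rewrite -h3]; ring.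
by split; [rewrite h2 | rewrite h3]; ring.
Qed.

Lemma balanced_cell {X : vec5 R} :
  c1 X != 0 -> c4 X != 0 -> balanced 0 X <-> vel X = u /\ pres X = p.
Proof.
move=> h1 h4; rewrite balancedE /vel /pres !mul0r !addr0.
split=> -[hu hp].
  by rewrite hu hp; split; field_nz.
by rewrite -hu -hp; split; field_nz.
Qed.

Lemma balanced_point_values (j : int) :
  [/\ pu (Vm j) = u, pu (Vp j) = u, pp (Vm j) = p & pp (Vp j) = p].
Proof.
have [um up] := recon_const dx lim_ok (u_const : forall i, comp_u Ub i = u) j.
have [pm pp] := recon_const dx lim_ok (p_const : forall i, comp_p Ub i = p) j.
by split.
Qed.

Lemma balanced_U (j : int) : balanced 0 (Um j) /\ balanced 0 (Up j).
Proof.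
have [um up pm pp] := balanced_point_values j.
by rewrite !balancedE /Um /Up /U_of_pv um up pm pp /=; split; split; field_nz.
Qed.

(* the physical flux at velocity u and pressure p is u U + p (0, 1, u, 0, 0) *)
Lemma balanced_F {j : int} :
  regular_at j -> balanced 1 (Fm j) /\ balanced 1 (Fp j).
Proof.
move=> reg; have rm := lt0r_neq0 (rho_m_pos reg); have rp := lt0r_neq0 (rho_p_pos reg).
have gm := lt0r_neq0 (gam_m_pos reg); have gp := lt0r_neq0 (gam_p_pos reg).
have [um up pm pp] := balanced_point_values j.
rewrite !balancedE /Fm /Fp /flux /vel /pres /Um /Up /U_of_pv um up pm pp /=.
by split; split; field_nz.
Qed.

(* the path-conservative terms vanish since there is no velocity jump *)
Lemma balanced_Bcell (j : int) : balanced 0 (Bcell j).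
Proof.
have [um _ _ _] := balanced_point_values j.
have [_ up _ _] := balanced_point_values (j - 1).
by rewrite balancedE /Bcell um up subrr /=; split; ring.
Qed.

Lemma balanced_BPsi (j : int) : balanced 0 (BPsi j).
Proof.
have [um up _ _] := balanced_point_values j.
by rewrite balancedE /BPsi um up subrr /=; split; ring.
Qed.

Lemma balanced_K {n : nat} : regular_at n -> balanced 1 (Km n) /\ balanced 1 (Kp n).
Proof.
move=> reg; have [Fm_bal Fp_bal] := balanced_F reg.
have hB (k : nat) : balanced (0 - 0) (Bcell k.+1) by rewrite subrr; exact: balanced_Bcell.
have hPsi (k : nat) : balanced (0 - 0) (BPsi k) by rewrite subrr; exact: balanced_BPsi.
have [Km_bal Kp_bal] := K_on_line (fun=> 0) (fun=> 0) hB hPsi Fm_bal Fp_bal.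
by split; [apply: on_line_eq Km_bal _ | apply: on_line_eq Kp_bal _]; rewrite !subr0.
Qed.

(* U* has velocity u and pressure p, hence each building block of q has weight 0 *)
Lemma balanced_qvec {n : nat} :
  regular_at n -> balanced 0 (Ustar n) -> balanced 0 (qvec n).
Proof.
move=> reg; have h1 := rho_star_neq0 reg; have h4 := gam_star_neq0 reg.
move=> /(balanced_cell h1 h4); rewrite /vel /pres => -[ustar_u pstar_p].
have E1 : balanced 0 (V5 1 (ustar n) (2^-1 * ustar n ^+ 2) 0 0).
  by rewrite balancedE /ustar ustar_u /=; split; field_nz.
have E2 : balanced 0 (V5 0 0 ((c4 (Ustar n))^-1 * (c3 (Ustar n) -
             (c2 (Ustar n)) ^+ 2 / (2 * c1 (Ustar n)) - c5 (Ustar n))) 1 0).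
  by rewrite balancedE mulrC pstar_p /=; split; ring.
have E3 : balanced 0 (V5 0 0 1 0 1) by rewrite balancedE /=; split; ring.
apply: on_line_eq (on_line_add (on_line_add (on_line_scale _ E1) (on_line_scale _ E2))
                               (on_line_scale _ E3)) _.
by rewrite !mulr0 !addr0.
Qed.

Lemma balanced_Kflux {n : nat} : regular_at n -> balanced 1 (Kflux n).
Proof.
move=> reg; have hd := lt0r_neq0 (speeds_pos reg).
have [Um_bal Up_bal] := balanced_U n; have [Km_bal Kp_bal] := balanced_K reg.
have q_bal := balanced_qvec reg (Ustar_on_line Um_bal Up_bal Km_bal Kp_bal hd).
exact: Kflux_on_line Um_bal Up_bal Km_bal Kp_bal q_bal hd.
Qed.

Lemma balanced_euler_step {N : nat} (dt : R) :
  well_defined dx lim Ub N ->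
  forall j : int, 1 <= j <= N%:Z ->
    c1 (euler_step dx lim Ub dt j) != 0 -> c4 (euler_step dx lim Ub dt j) != 0 ->
    vel (euler_step dx lim Ub dt j) = u /\ pres (euler_step dx lim Ub dt j) = p.
Proof.
move=> wd j /interior_cell [m -> ltmN] e1 e4.
have regm := well_defined_regular wd (ltnW ltmN).
have regm1 := well_defined_regular wd ltmN.
have [rho_pos gam_pos] := interior_cell_pos regm regm1.
have cell_bal : balanced 0 (Ub m.+1).
  by apply/(balanced_cell (lt0r_neq0 rho_pos) (lt0r_neq0 gam_pos)); split.
have rhs_bal := rhs_on_line (balanced_Kflux regm1) (balanced_Kflux regm).
exact/(balanced_cell e1 e4)/(euler_on_line dt cell_bal rhs_bal).
Qed.
End PressureVelocityEquilibrium.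
End Scheme.

Theorem theorem1 (R : rcfType) (N : nat) (dx : R) (s : nat)
    (lim : (int -> R) -> int -> R) :
  0 < dx -> limiter_ok s lim ->
  (* Part 1: constant Gamma and Pi are preserved by the semi-discrete scheme *)
  (forall (Ub : int -> vec5 R) (Ghat Phat : R),
     well_defined dx lim Ub N ->
     (forall j : int, c4 (Ub j) = Ghat /\ c5 (Ub j) = Phat) ->
     forall j : int, 1 <= j <= N%:Z ->
       c4 (rhs dx lim Ub j) = 0 /\ c5 (rhs dx lim Ub j) = 0) /\
  (* Part 2: constant velocity and pressure are preserved by a forward Euler step *)
  (forall (Ub : int -> vec5 R) (uhat phat dt : R),
     well_defined dx lim Ub N ->
     (forall j : int, vel (Ub j) = uhat /\ pres (Ub j) = phat) ->
     forall j : int, 1 <= j <= N%:Z ->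
       c1 (euler_step dx lim Ub dt j) != 0 ->
       c4 (euler_step dx lim Ub dt j) != 0 ->
       vel (euler_step dx lim Ub dt j) = uhat /\
       pres (euler_step dx lim Ub dt j) = phat).
Proof.
move=> _ lim_ok; split.
- move=> Ub G P wd GP_const.
  exact: (advected_rhs_zero lim_ok (fun j => (GP_const j).1) (fun j => (GP_const j).2) wd).
- move=> Ub u p dt wd up_const.
  exact: (balanced_euler_step lim_ok (fun j => (up_const j).1) (fun j => (up_const j).2) dt wd).
Qed.
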